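(* Let $r\ge 2$ and $1\le p\le r-1$ be integers, let $H=(V,\mathcal{E})$ be an $r$-uniform hypergraph, and let $V_1,\dots,V_k$ be (not necessarily disjoint) subsets of $V$ with $\bigcup_{i=1}^k V_i = V$. Let $H_i = H[V_i]$ for $1\le i\le k$. Then \[\overrightarrow{\Gamma}_p(H) \le \sum_{i=1}^k \overrightarrow{\Gamma}_p(H_i).\]
   Context: For $U\subseteq V$, the induced subhypergraph $H[U]$ has vertex set $U$ and edge set consisting of all $E\in\mathcal{E}$ with $E\subseteq U$. An orientation $D$ of an $r$-uniform hypergraph $H=(V,\mathcal{E})$ assigns to each edge exactly one of the $r!$ linear orderings of its elements. A set $S\subseteq V$ is a directed $p$-dominating set of $D$ if for every vertex $u\in V\setminus S$ there is an edge $E$ with $u\in E$ whose first $p$ vertices (in the ordering given by $D$) all lie in $S$; if $H$ has no edges containing $u$, then $u$ must lie in $S$ (e.g. for an edgeless hypergraph $S=V$ is forced). $\overrightarrow{\gamma}_p(D)$ is the minimum cardinality of a directed $p$-dominating set of $D$, and $\overrightarrow{\Gamma}_p(H)$ is the maximum of $\overrightarrow{\gamma}_p(D)$ over all orientations $D$ of $H$. *)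

From mathcomp Require Import all_boot.
Set Implicit Arguments. Unset Strict Implicit. Unset Printing Implicit Defensive.

(* A hypergraph on the finite vertex type T is given by a vertex set U and an
   edge set F : {set {set T}} (each edge a subset of U).  An orientation of an
   r-uniform hypergraph assigns to each edge e a linear ordering of its
   elements, represented by a duplicate-free r-tuple whose underlying set is e.
   (Values of D on non-edges are irrelevant.) *)

Definition is_orientation (T : finType) (r : nat) (F : {set {set T}})
  (D : {ffun {set T} -> r.-tuple T}) : bool :=
  [forall e in F, uniq (D e) && ([set x in (D e : seq T)] == e)].

Definition is_dir_pdom (T : finType) (r p : nat) (U : {set T})
  (F : {set {set T}}) (D : {ffun {set T} -> r.-tuple T}) (S : {set T}) : bool :=
  (S \subset U) &&
  [forall u in U :\: S,
     [exists e in F, (u \in e) && all (fun x => x \in S) (take p (D e))]].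

(* gamma_p(D): minimum cardinality of a directed p-dominating set
   (U itself is always one, so #|U| is a valid default). *)
Definition dir_gamma (T : finType) (r p : nat) (U : {set T})
  (F : {set {set T}}) (D : {ffun {set T} -> r.-tuple T}) : nat :=
  \big[minn/#|U|]_(S : {set T} | is_dir_pdom p U F D S) #|S|.

Definition dir_Gamma (T : finType) (r p : nat) (U : {set T})
  (F : {set {set T}}) : nat :=
  \max_(D : {ffun {set T} -> r.-tuple T} | is_orientation F D) dir_gamma p U F D.

Definition induced_edges (T : finType) (F : {set {set T}}) (W : {set T})
  : {set {set T}} := [set e in F | e \subset W].

From mathcomp Require Import all_boot.

Set Implicit Arguments.
Unset Strict Implicit.
Unset Printing Implicit Defensive.

(* Fix an orientation D of H = (V, E) and a cover V = V_1 u ... u V_k.  The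
   same D restricts to an orientation of every induced subhypergraph H[V_i].
   If S_i is a minimum directed p-dominating set of D on H[V_i], then the
   union S of the S_i is directed p-dominating for D on H: a vertex u outside
   S lies in some V_i and outside S_i, so an edge of H[V_i] -- hence of H --
   containing u has its first p vertices in S_i, hence in S.  Therefore
     gamma_p(D) <= |S| <= sum_i |S_i| = sum_i gamma_p(D|H[V_i])
                                     <= sum_i Gamma_p(H[V_i]),
   and maximizing over D gives the theorem. *)

(* An iterated minimum is bounded by each of its admissible terms.  (The
   default x0 need not be neutral for minn, so bigD1 does not apply.) *)
Lemma bigminn_le_seq (I : eqType) (s : seq I) (P : pred I) (F : I -> nat) x0 j :
  j \in s -> P j -> \big[minn/x0]_(i <- s | P i) F i <= F j.
Proof.
elim: s => [|i s IHs] //= /[!in_cons] /orP [/eqP <-|j_s] Pj; rewrite big_cons.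
  by rewrite Pj geq_minl.
case: (P i); last exact: IHs j_s Pj.
exact: leq_trans (geq_minr _ _) (IHs j_s Pj).
Qed.

Lemma bigminn_attained (I : finType) (P : pred I) (F : I -> nat) x0 :
  (exists2 i, P i & F i <= x0) ->
  exists2 i, P i & F i <= \big[minn/x0]_(i | P i) F i.
Proof.
move=> x0_attained.
apply: (big_ind (fun m => exists2 i, P i & F i <= m)) => //.
- move=> m n [i Pi le_im] [j Pj le_jn].
  case: (leqP m n) => [le_mn|/ltnW le_nm].
    by exists i; rewrite // (minn_idPl le_mn).
  by exists j; rewrite // (minn_idPr le_nm).
- by move=> i Pi; exists i.
Qed.

Lemma card_bigcup_le (T I : finType) (P : pred I) (S : I -> {set T}) :
  #|\bigcup_(i | P i) S i| <= \sum_(i | P i) #|S i|.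
Proof.
apply: (big_ind2 (fun (X : {set T}) n => #|X| <= n)) => [|X m Y n leXm leYn|//].
  by rewrite cards0.
by rewrite (leq_trans (leq_card_setU X Y).1) ?leq_add.
Qed.

Section DirectedDomination.

Variables (T : finType) (r p : nat).
Implicit Types (U W : {set T}) (F : {set {set T}})
  (D : {ffun {set T} -> r.-tuple T}).

Lemma dir_pdom_whole U F D : is_dir_pdom p U F D U.
Proof.
by rewrite /is_dir_pdom subxx; apply/forall_inP => u; rewrite setDv inE.
Qed.

Lemma dir_gamma_le U F D S : is_dir_pdom p U F D S -> dir_gamma p U F D <= #|S|.
Proof. by apply: bigminn_le_seq; rewrite mem_index_enum. Qed.

Lemma dir_gamma_witness U F D :
  exists2 S, is_dir_pdom p U F D S & #|S| <= dir_gamma p U F D.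
Proof. by apply: bigminn_attained; exists U; rewrite ?dir_pdom_whole. Qed.

Lemma orientation_induced F D W :
  is_orientation F D -> is_orientation (induced_edges F W) D.
Proof.
move/forall_inP=> oriented; apply/forall_inP => e.
by rewrite inE => /andP [/oriented].
Qed.

Lemma dir_gamma_induced_le F D W : is_orientation F D ->
  dir_gamma p W (induced_edges F W) D <= dir_Gamma r p W (induced_edges F W).
Proof.
move=> oriented; rewrite /dir_Gamma.
apply: (@leq_bigmax_cond _ (fun D' => is_orientation (induced_edges F W) D')
          (fun D' => dir_gamma p W (induced_edges F W) D')).
exact: orientation_induced.
Qed.

Lemma dir_pdom_bigcup (I : finType) U F D (Vs S : I -> {set T}) :
  \bigcup_i Vs i = U ->
  (forall i, is_dir_pdom p (Vs i) (induced_edges F (Vs i)) D (S i)) ->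
  is_dir_pdom p U F D (\bigcup_i S i).
Proof.
move=> cover_U Sdom; apply/andP; split.
  rewrite -cover_U; apply/bigcupsP => i _.
  by case/andP: (Sdom i) => /subset_trans -> //; apply: bigcup_sup.
apply/forall_inP => u; rewrite inE => /andP [uS].
rewrite -cover_U => /bigcupP [i _ u_Vi].
have uSi : u \notin S i by apply: contra uS => uSi; apply/bigcupP; exists i.
case/andP: (Sdom i) => _ /forall_inP /(_ u).
rewrite inE uSi u_Vi => /(_ isT) /exists_inP [e].
rewrite inE => /andP [eF _] /andP [ue headS].
apply/exists_inP; exists e; rewrite // ue /=.
by apply/allP => x /(allP headS) xS; apply/bigcupP; exists i.
Qed.

Lemma dir_gamma_subadditive (I : finType) U F D (Vs : I -> {set T}) :
  \bigcup_i Vs i = U ->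
  dir_gamma p U F D <= \sum_i dir_gamma p (Vs i) (induced_edges F (Vs i)) D.
Proof.
move=> cover_U.
have [S Sdom S_min] := fin_all_exists2 (fun i =>
  dir_gamma_witness (Vs i) (induced_edges F (Vs i)) D).
apply: leq_trans (dir_gamma_le (dir_pdom_bigcup cover_U Sdom)) _.
apply: leq_trans (card_bigcup_le predT S) _.
exact: leq_sum.
Qed.

End DirectedDomination.

Theorem mainTheorem3 (T : finType) (r p : nat) (E : {set {set T}})
  (k : nat) (Vs : 'I_k -> {set T}) :
  2 <= r -> 1 <= p <= r - 1 ->
  (forall e, e \in E -> #|e| = r) ->
  \bigcup_(i < k) Vs i = [set: T] ->
  dir_Gamma r p [set: T] E <=
    \sum_(i < k) dir_Gamma r p (Vs i) (induced_edges E (Vs i)).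
Proof.
move=> _ _ _ cover_V; apply/bigmax_leqP => D oriented.
apply: leq_trans (dir_gamma_subadditive p E D cover_V) _.
by apply: leq_sum => i _; apply: dir_gamma_induced_le.
Qed.
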